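(* Suppose all agents are single-minded, agent $i$ having value $v_i>0$ for any set containing $S_i\subseteq M$ (and $0$ otherwise). Consider the following algorithm (SingleMinded MC-CWE). Phase 1: let $Q=\{i:|S_i|\le\sqrt{m}\}$; process agents of $Q$ in decreasing order of $v_i$, assigning $x_i=S_i$ to agent $i$ if $S_i$ is disjoint from all sets assigned so far (all other agents get $x_i=\emptyset$); then add each item not yet allocated to an arbitrary nonempty bundle $x_j$. Phase 2: for each $i\notin Q$ in decreasing order of $v_i$, let $C_i=\{j: x_j\cap S_i\neq\emptyset\}$; if $v_i>\sum_{j\in C_i}v_j$ then set $x_i\leftarrow\bigcup_{j\in C_i}x_j$ and $x_j\leftarrow\emptyset$ for each $j\in C_i$. Return $x$. Then the returned allocation is an MC-CWE allocation whose social welfare is within a factor $O(\sqrt{m})$ of the optimal social welfare over all allocations, and the algorithm can be implemented with a polynomial number of value queries.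
   Context: $M$ is a finite set of $m$ indivisible items and $[n]$ a set of agents. An allocation is a tuple $(x_0,\dots,x_n)$ of pairwise disjoint sets with union $M$ ($x_0$ unallocated); social welfare is $\sum_i v_i(x_i)$ where for single-minded agent $i$, $v_i(T)=v_i$ if $S_i\subseteq T$ and $0$ otherwise. An allocation is MC-CWE if there are prices $p_k\ge0$ for each nonempty bundle $x_k$ such that (i) for every agent $i$ and every set $T$ of indices of nonempty bundles, $u_i\ge v_i(\bigcup_{k\in T}x_k)-\sum_{k\in T}p_k$, where $u_i=v_i(x_i)-p_i$ if $x_i\neq\emptyset$ and $0$ otherwise; and (ii) $p_0=0$ if $x_0\ne\emptyset$. A value query asks agent $i$ for $v_i(S)$ for a given $S$. *)

From HB Require Import structures.
From mathcomp Require Import all_boot all_order all_algebra.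
From mathcomp Require Import reals.
Set Implicit Arguments. Unset Strict Implicit. Unset Printing Implicit Defensive.
Import Order.TTheory GRing.Theory Num.Theory.
Local Open Scope ring_scope.

Section SingleMinded.
Variables (R : realType) (n m : nat).

(* Bundles are indexed by option 'I_n : None is the unallocated bundle x_0,
   Some i is the bundle x_i of agent i.  Items are 'I_m. *)
Definition alloc := {ffun option 'I_n -> {set 'I_m}}.

Definition is_alloc (x : alloc) : Prop :=
  (forall k k' : option 'I_n, k != k' -> [disjoint x k & x k']) /\
  \bigcup_(k : option 'I_n) x k = [set: 'I_m].

Variables (S : 'I_n -> {set 'I_m}) (v : 'I_n -> R).

Definition sm_val (i : 'I_n) (T : {set 'I_m}) : R := if S i \subset T then v i else 0.

Definition SW (x : alloc) : R := \sum_(i : 'I_n) sm_val i (x (Some i)).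

Definition utility (x : alloc) (p : option 'I_n -> R) (i : 'I_n) : R :=
  if x (Some i) != set0 then sm_val i (x (Some i)) - p (Some i) else 0.

Definition is_MC_CWE (x : alloc) : Prop :=
  is_alloc x /\
  exists p : option 'I_n -> R,
    (forall k, x k != set0 -> 0 <= p k) /\
    (forall (i : 'I_n) (T : {set option 'I_n}),
        T \subset [set k | x k != set0] ->
        sm_val i (\bigcup_(k in T) x k) - \sum_(k in T) p k <= utility x p i) /\
    (x None != set0 -> p None = 0).

Definition Qset : {set 'I_n} := [set i | (#|S i|%:R <= Num.sqrt (m%:R : R))].

Definition dec_order (A : {set 'I_n}) (s : seq 'I_n) : Prop :=
  perm_eq s (enum A) /\ sorted (fun a b => v b <= v a) s.

(* greedy step of phase 1; state = (items allocated so far, agents' bundles) *)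
Definition greedy_step (st : {set 'I_m} * {ffun 'I_n -> {set 'I_m}}) (i : 'I_n) :=
  if [disjoint S i & st.1]
  then (st.1 :|: S i, finfun (fun j => if j == i then S i else st.2 j))
  else st.

Definition greedy (s : seq 'I_n) := foldl greedy_step (set0, [ffun _ => set0]) s.

(* Phase 1 output: greedy allocation, then every unallocated item is added to an
   arbitrary nonempty agent bundle (chosen by f); if no agent bundle is nonempty
   the items remain in x_0. *)
Definition phase1 (x : alloc) : Prop :=
  exists s : seq 'I_n, dec_order Qset s /\
  let A := (greedy s).1 in let g := (greedy s).2 in
  if [exists j, g j != set0] then
    exists f : 'I_m -> 'I_n,
      (forall k, k \notin A -> g (f k) != set0) /\
      x None = set0 /\
      (forall j, x (Some j) = g j :|: [set k | (k \notin A) && (f k == j)])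
  else x None = ~: A /\ (forall j, x (Some j) = g j).

Definition wv (k : option 'I_n) : R := if k is Some j then v j else 0.

Definition phase2_step (x : alloc) (i : 'I_n) : alloc :=
  let C := [set k | x k :&: S i != set0] in
  if \sum_(k in C) wv k < v i then
    finfun (fun k => if k == Some i then \bigcup_(k' in C) x k'
                     else if k \in C then set0 else x k)
  else x.

Definition SM_run (x : alloc) : Prop :=
  exists x1 : alloc, phase1 x1 /\
  exists s : seq 'I_n, dec_order (~: Qset) s /\ x = foldl phase2_step x1 s.

End SingleMinded.

Inductive qprog (n m : nat) (R A : Type) : Type :=
| QRet : A -> qprog n m R A
| QAsk : 'I_n -> {set 'I_m} -> (R -> qprog n m R A) -> qprog n m R A.

Arguments QRet {n m R A}.
Arguments QAsk {n m R A}.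

Fixpoint qrun n m R A (o : 'I_n -> {set 'I_m} -> R) (P : qprog n m R A) : A * nat :=
  match P with
  | QRet a => (a, 0%N)
  | QAsk i T k => let r := qrun o (k (o i T)) in (r.1, r.2.+1)
  end.

From HB Require Import structures.
From mathcomp Require Import all_boot all_order all_algebra.
From mathcomp Require Import reals boolp zify.
Import Order.TTheory GRing.Theory Num.Theory.
Local Open Scope ring_scope.
Set Implicit Arguments. Unset Strict Implicit. Unset Printing Implicit Defensive.

(* Price every bundle at the value of its owner (the unallocated bundle at 0).  Both
   phases keep every nonempty agent bundle a superset of its owner's demand set, and
   never decrease the total value of the bundles meeting a given set of items; once
   agent i has been processed, the bundles meeting S_i are worth at least v_i.  Hence
   no agent gains by buying bundles, which is the MC-CWE condition.
   The agents served by any allocation have pairwise disjoint demand sets.  Those with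
   |S_i| <= sqrt m were blocked in phase 1 by a no less valuable winner j, and charging
   i to j costs j at most |S_j| <= sqrt m times v_j; there are at most sqrt m of the
   others, each worth at most the final welfare.  Finally the n (m + 1) value queries
   v_i(M) and v_i(M \ {t}) reveal every v_i and S_i. *)

Lemma big_option (R : Type) (idx : R) (op : Monoid.com_law idx) (I : finType)
    (F : option I -> R) :
  \big[op/idx]_k F k = op (F None) (\big[op/idx]_i F (Some i)).
Proof.
rewrite (bigD1 None) //=; congr (op _ _).
rewrite (eq_bigl (mem [set Some i | i in [set: I]])); last first.
  by case=> [i|] /=; rewrite ?imset_f ?inE //; apply/esym/imsetP => -[].
by rewrite big_imset /=; [apply: eq_bigl => i; rewrite inE | move=> i j _ _ []].
Qed.

Lemma ler_sum_subset (R : numDomainType) (I : finType) (A B : {set I}) (F : I -> R) :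
  A \subset B -> (forall i, 0 <= F i) -> \sum_(i in A) F i <= \sum_(i in B) F i.
Proof.
move=> AB F0; rewrite [X in _ <= X](big_setID A) (setIidPr AB) /= lerDl.
exact: sumr_ge0.
Qed.

Lemma sum_card_setI_le (I T : finType) (F : I -> {set T}) (O : {set I}) (B : {set T}) :
  {in O &, forall i j, i != j -> [disjoint F i & F j]} ->
  (\sum_(i in O) #|F i :&: B| <= #|B|)%N.
Proof.
move=> disjF.
have cardE i : #|F i :&: B| = (\sum_(t in B) (t \in F i))%N.
  rewrite -sum1_card big_mkcond [RHS]big_mkcond /=; apply: eq_bigr => t _.
  by rewrite inE; case: (t \in F i); case: (t \in B).
rewrite (eq_bigr _ (fun i _ => cardE i)) exchange_big /= -sum1_card leq_sum // => t _.
case: (pickP [pred i in O | t \in F i]) => [i /andP [iO tFi]|none]; last first.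
  by rewrite big1 // => j jO; have := none j; rewrite /= jO => /= ->.
rewrite (bigD1 i) //= tFi big1 // => j /andP [jO ji].
by apply/eqP; rewrite eqb0 (disjointFl (disjF j i jO iO ji) tFi).
Qed.

Section Allocations.
Variables (n m : nat) (x : alloc n m).

Lemma alloc_uniq t k k' : is_alloc x -> t \in x k -> t \in x k' -> k = k'.
Proof.
case=> disj _ tk tk'; apply/eqP; apply: contraT => kk'.
by rewrite (disjointFr (disj _ _ kk') tk) in tk'.
Qed.

Lemma alloc_cover t : is_alloc x -> exists k, t \in x k.
Proof.
case=> _ cov; have : t \in \bigcup_k x k by rewrite cov inE.
by case/bigcupP => k _ tk; exists k.
Qed.

Lemma is_allocP :
  (forall t k k', t \in x k -> t \in x k' -> k = k') -> (forall t, exists k, t \in x k) ->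
  is_alloc x.
Proof.
move=> uniq_x cover_x; split.
  move=> k k' kk'; rewrite -setI_eq0; apply/set0Pn => -[t /setIP [tk tk']].
  by rewrite (uniq_x _ _ _ tk tk') eqxx in kk'.
by apply/setP => t; rewrite inE; have [k tk] := cover_x t; apply/bigcupP; exists k.
Qed.

End Allocations.

Section SingleMindedRun.
Variables (R : realType) (n m : nat) (S : 'I_n -> {set 'I_m}) (v : 'I_n -> R).
Hypotheses (v_gt0 : forall i, 0 < v i) (S_neq0 : forall i, S i != set0).

Definition demand_met (x : alloc n m) :=
  forall j, x (Some j) != set0 -> S j \subset x (Some j).

Definition meet_value (x : alloc n m) (T : {set 'I_m}) : R :=
  \sum_(k in [set k | x k :&: T != set0]) wv v k.

Definition disjoint_demands (O : {set 'I_n}) :=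
  {in O &, forall i j, i != j -> [disjoint S i & S j]}.

Definition blocked_by (W : {set 'I_n}) :=
  {in Qset R S, forall i, exists2 j, j \in W & v i <= v j /\ S j :&: S i != set0}.

Lemma wv_ge0 k : 0 <= wv v k.
Proof. by case: k => [j|] //=; apply: ltW. Qed.

Lemma meet_value_ge (x : alloc n m) T k : x k :&: T != set0 -> wv v k <= meet_value x T.
Proof.
by move=> xkT; rewrite /meet_value (bigD1 k) ?inE //= lerDl sumr_ge0 // => *; apply: wv_ge0.
Qed.

Lemma meet_value_le_setT (x : alloc n m) T : meet_value x T <= meet_value x setT.
Proof.
apply: ler_sum_subset wv_ge0; apply/subsetP => k; rewrite !inE setIT.
by apply: contraNN => /eqP ->; rewrite set0I.
Qed.

Lemma SW_meet_value (x : alloc n m) : demand_met x -> SW S v x = meet_value x setT.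
Proof.
move=> dem; rewrite /SW /meet_value [RHS]big_mkcond big_option /= !inE if_same add0r.
apply: eq_bigr => i _; rewrite inE setIT /sm_val.
have [->|xi0] := eqVneq (x (Some i)) set0; first by rewrite subset0 (negbTE (S_neq0 i)).
by rewrite dem.
Qed.

(* Pricing every bundle at its owner's value gives every owner utility 0, and any
   set of bundles covering [S i] costs at least [meet_value x (S i)]. *)
Lemma MC_CWE_of_covered (x : alloc n m) : is_alloc x -> demand_met x ->
  (forall i, v i <= meet_value x (S i)) -> is_MC_CWE S v x.
Proof.
move=> xa dem cov; split=> //; exists (wv v); split; first by move=> k _; apply: wv_ge0.
split=> // i T _.
have -> : utility S v x (wv v) i = 0.
  by rewrite /utility /sm_val; case: ifP => // /dem ->; rewrite subrr.
rewrite subr_le0 /sm_val; case: ifP => [SiT|_]; last by apply: sumr_ge0 => k _; apply: wv_ge0.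
apply: le_trans (cov i) (ler_sum_subset _ wv_ge0); apply/subsetP => k.
rewrite inE => /set0Pn [t /setIP [tk tSi]].
have /bigcupP [k' k'T tk'] := subsetP SiT _ tSi.
by rewrite (alloc_uniq xa tk tk').
Qed.

Section Phase2Step.
Variables (x : alloc n m) (i : 'I_n).
Hypotheses (x_alloc : is_alloc x) (x_dem : demand_met x).

Let C := [set k | x k :&: S i != set0].
Let win := \sum_(k in C) wv v k < v i.
Let x' := phase2_step S v x i.

Lemma phase2_step_lose : ~~ win -> x' = x.
Proof. by rewrite /x' /phase2_step -/C -/win => /negbTE ->. Qed.

Lemma owner_bundle_meets : x (Some i) != set0 -> Some i \in C.
Proof. by move=> xi0; rewrite inE (setIidPr (x_dem xi0)). Qed.

Lemma mem_phase2_win t k0 k : win -> t \in x k0 ->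
  (t \in x' k) = (k == if k0 \in C then Some i else k0).
Proof.
rewrite /x' /phase2_step -/C -/win => w tk0; rewrite w ffunE.
have uniq_t k1 : t \in x k1 -> k1 = k0 by move=> tk1; apply: alloc_uniq tk1 tk0.
have [->{k}|ki] := eqVneq k (Some i).
  apply/bigcupP/idP => [[k1 k1C /uniq_t e]|]; first by rewrite -e k1C.
  case: ifP => [k0C _|k0C /eqP ik0]; first by exists k0.
  suff : Some i \in C by rewrite ik0 k0C.
  by apply: owner_bundle_meets; apply/set0Pn; exists t; rewrite ik0.
case k0C: (k0 \in C); case: ifP => kC.
- by rewrite inE (negbTE ki).
- apply/idP/eqP => [/uniq_t ek|ek]; first by rewrite ek k0C in kC.
  by rewrite ek eqxx in ki.
- by rewrite inE; apply/esym/eqP => ek; rewrite ek k0C in kC.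
- by apply/idP/eqP => [/uniq_t|->].
Qed.

Lemma demand_sub_winner : win -> S i \subset x' (Some i).
Proof.
move=> w; apply/subsetP => t tSi; have [k0 tk0] := alloc_cover t x_alloc.
suff k0C : k0 \in C by rewrite (mem_phase2_win _ w tk0) k0C.
by rewrite inE; apply/set0Pn; exists t; rewrite inE tk0.
Qed.

Lemma phase2_step_alloc : is_alloc x'.
Proof.
case: (boolP win) => [w|/phase2_step_lose -> //].
apply: is_allocP => [t k k'|t]; have [k0 tk0] := alloc_cover t x_alloc.
  by rewrite !(mem_phase2_win _ w tk0) => /eqP -> /eqP ->.
by eexists; rewrite (mem_phase2_win _ w tk0).
Qed.

Lemma phase2_step_demand : demand_met x'.
Proof.
case: (boolP win) => [w|/phase2_step_lose -> //].
move=> j /set0Pn [t0]; have [k1 t0k1] := alloc_cover t0 x_alloc.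
rewrite (mem_phase2_win _ w t0k1); case: ifP => k1C /eqP ej.
  by case: ej => ->; apply: demand_sub_winner.
subst k1; apply/subsetP => t tSj.
have txj : t \in x (Some j) by apply: (subsetP (x_dem _)) tSj; apply/set0Pn; exists t0.
by rewrite (mem_phase2_win _ w txj) k1C.
Qed.

Lemma phase2_step_meet_value T : meet_value x T <= meet_value x' T.
Proof.
case: (boolP win) => [w|/phase2_step_lose -> //].
set B := [set k | x k :&: T != set0]; set B' := [set k | x' k :&: T != set0].
have mapB k : k \in B -> (if k \in C then Some i else k) \in B'.
  rewrite inE => /set0Pn [t /setIP [tk tT]]; rewrite inE; apply/set0Pn; exists t.
  by rewrite inE tT andbT (mem_phase2_win _ w tk).
have BDC_B' : B :\: C \subset B'.
  by apply/subsetP => k /setDP [kB kC]; have := mapB k kB; rewrite (negbTE kC).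
rewrite /meet_value -/B -/B' (big_setID C) /=.
have [->|/set0Pn [k /setIP [kB kC]]] := eqVneq (B :&: C) set0.
  by rewrite big_set0 add0r ler_sum_subset //; apply: wv_ge0.
have iB' : Some i \in B' by have := mapB k kB; rewrite kC.
have iBDC : Some i \notin B :\: C.
  apply/negP => /setDP [iB]; apply/negP/negPn; apply: owner_bundle_meets.
  by apply: contraTneq iB => e; rewrite inE e set0I eqxx.
apply: le_trans (_ : v i + \sum_(k in B :\: C) wv v k <= _).
  rewrite lerD2r; apply: le_trans (ltW w); apply: ler_sum_subset wv_ge0.
  exact: subsetIr.
rewrite -[v i]/(wv v (Some i)) -big_setU1 //= ler_sum_subset //; last exact: wv_ge0.
by rewrite subUset sub1set iB'.
Qed.

Lemma phase2_step_covers : v i <= meet_value x' (S i).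
Proof.
case: (boolP win) => [w|lose]; last by rewrite phase2_step_lose // leNgt.
apply: (meet_value_ge (k := Some i)); rewrite (setIidPr (demand_sub_winner w)).
exact: S_neq0.
Qed.

End Phase2Step.

Lemma foldl_phase2_step (s : seq 'I_n) (x : alloc n m) : is_alloc x -> demand_met x ->
  let x' := foldl (phase2_step S v) x s in
  [/\ is_alloc x', demand_met x', forall T, meet_value x T <= meet_value x' T &
      forall i, i \in s -> v i <= meet_value x' (S i)].
Proof.
elim: s x => [|i s IH] x xa xd //=.
have [xa' xd' mono cov] := IH _ (phase2_step_alloc i xa xd) (phase2_step_demand xa xd).
split=> // [T|j]; first exact: le_trans (phase2_step_meet_value i xa xd T) (mono T).
rewrite inE => /predU1P [->|/cov //].
exact: le_trans (phase2_step_covers i xa xd) (mono _).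
Qed.

Local Notation state := ({set 'I_m} * {ffun 'I_n -> {set 'I_m}})%type.

Definition greedy_state (st : state) :=
  [/\ forall j, st.2 j = set0 \/ st.2 j = S j,
      forall j j', j != j' -> [disjoint st.2 j & st.2 j'] &
      st.1 = \bigcup_j st.2 j].

Lemma greedy_step_state (st : state) i : greedy_state st -> greedy_state (greedy_step S st i).
Proof.
case: st => [A g] [/= g_S g_disj ->]; rewrite /greedy_step /=.
case: ifP => //= Si_disj; split=> /= [j|j j' jj'|].
- by rewrite !ffunE; case: eqP => [->|_]; [right | apply: g_S].
- have gi_disj k : [disjoint g k & S i].
    by rewrite disjoint_sym; apply: disjointWr Si_disj; apply: bigcup_sup.
  rewrite !ffunE; case: eqP => [ji|_]; case: eqP => [j'i|_] //.
  + by rewrite ji j'i eqxx in jj'.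
  + by rewrite disjoint_sym.
  + exact: g_disj.
- apply/setP => t; rewrite inE; apply/orP/bigcupP => [[/bigcupP [j _ tj]|tSi]|[j _]].
  + exists j; rewrite // ffunE; case: eqP => [ji|//]; rewrite -ji.
    by case: (g_S j) tj => ->; rewrite ?inE.
  + by exists i; rewrite // ffunE eqxx.
  + rewrite ffunE; case: eqP => [_|_ tj]; first by right.
    by left; apply/bigcupP; exists j.
Qed.

Lemma greedy_step_keep (st : state) i j : st.2 j != set0 -> (greedy_step S st i).2 j != set0.
Proof.
move=> gj; rewrite /greedy_step; case: ifP => //= _.
by rewrite ffunE; case: (j =P i) => // _; apply: S_neq0.
Qed.

Lemma greedy_step_new (st : state) i j :
  (greedy_step S st i).2 j != set0 -> j = i \/ st.2 j != set0.
Proof.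
rewrite /greedy_step; case: ifP => [_ /=|_ gj]; last by right.
by rewrite ffunE; case: (j =P i) => [-> _|_ gj]; [left | right].
Qed.

Lemma greedy_step_blocker (st : state) i : greedy_state st -> exists j,
  [/\ (greedy_step S st i).2 j != set0, S j :&: S i != set0 & j = i \/ st.2 j != set0].
Proof.
case: st => [A g] [/= g_S _ A_def]; rewrite /greedy_step /=; case: ifP => Si_disj.
  by exists i; rewrite /= ffunE eqxx setIid S_neq0; split=> //; left.
have /set0Pn [t /setIP [tSi]] : S i :&: A != set0 by rewrite setI_eq0 Si_disj.
rewrite A_def => /bigcupP [j _ tj]; have gj0 : g j != set0 by apply/set0Pn; exists t.
exists j; split=> //=; last by right.
case: (g_S j) tj => -> tSj; first by rewrite inE in tSj.
by apply/set0Pn; exists t; rewrite inE tSj.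
Qed.

Lemma greedy_rcons s i : greedy S (rcons s i) = greedy_step S (greedy S s) i.
Proof. exact: foldl_rcons. Qed.

Lemma greedy_state_greedy s : greedy_state (greedy S s).
Proof.
elim/last_ind: s => [|s i IH]; last by rewrite greedy_rcons; apply: greedy_step_state.
split=> /= [j|j j' _|]; rewrite ?ffunE; [by left | by rewrite -setI_eq0 set0I |].
by apply/esym/setP => t; rewrite inE; apply/bigcupP => -[j _]; rewrite ffunE inE.
Qed.

Lemma greedy_winner_mem s j : (greedy S s).2 j != set0 -> j \in s.
Proof.
elim/last_ind: s => [|s i IH]; first by rewrite ffunE eqxx.
rewrite greedy_rcons mem_rcons inE => /greedy_step_new [->|/IH ->]; rewrite ?eqxx ?orbT //.
Qed.

(* Agents are processed by decreasing value, so whoever blocks agent [i] was processed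
   before [i] and is worth at least [v i]. *)
Lemma greedy_blocked s : pairwise (fun a b => v b <= v a) s -> forall i, i \in s ->
  exists j, [/\ (greedy S s).2 j != set0, v i <= v j & S j :&: S i != set0].
Proof.
elim/last_ind: s => [//|s i IH]; rewrite pairwise_rcons => /andP [/allP s_ge_i s_dec] i'.
rewrite greedy_rcons mem_rcons inE => /predU1P [->{i'}|i's].
  have [j [gj SjSi [ji|/greedy_winner_mem js]]] := greedy_step_blocker i (greedy_state_greedy s).
    by subst j; exists i.
  by exists j; split=> //; apply: s_ge_i.
have [j [gj vij SjSi']] := IH s_dec i' i's.
by exists j; split=> //; apply: greedy_step_keep.
Qed.

Lemma greedy_state_winner A (g : {ffun 'I_n -> {set 'I_m}}) j :
  greedy_state (A, g) -> g j != set0 -> g j = S j.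
Proof. by case=> /(_ j) [] -> //; rewrite eqxx. Qed.

Lemma greedy_state_mem A (g : {ffun 'I_n -> {set 'I_m}}) j t :
  greedy_state (A, g) -> t \in g j -> t \in A.
Proof. by case=> _ _ /= -> tj; apply/bigcupP; exists j. Qed.

Lemma greedy_state_cover A (g : {ffun 'I_n -> {set 'I_m}}) t :
  greedy_state (A, g) -> t \in A -> exists j, t \in g j.
Proof. by case=> _ _ /= -> /bigcupP [j _ tj]; exists j. Qed.

Lemma greedy_state_uniq A (g : {ffun 'I_n -> {set 'I_m}}) j j' t :
  greedy_state (A, g) -> t \in g j -> t \in g j' -> j = j'.
Proof.
case=> _ g_disj _ tj tj'; apply/eqP; apply: contraTT tj' => jj'.
by rewrite (disjointFr (g_disj _ _ jj') tj).
Qed.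

Lemma phase1_fill_alloc A (g : {ffun 'I_n -> {set 'I_m}}) f (x1 : alloc n m) :
  greedy_state (A, g) -> (forall t, t \notin A -> g (f t) != set0) -> x1 None = set0 ->
  (forall j, x1 (Some j) = g j :|: [set t | (t \notin A) && (f t == j)]) ->
  is_alloc x1 /\ demand_met x1.
Proof.
move=> gst fA x1N x1S; split.
  apply: is_allocP => [t [j|] [j'|]|t]; rewrite ?x1N ?inE //.
    rewrite !x1S !inE.
    case/orP => [tj|/andP [tA /eqP <-]]; case/orP => [tj'|/andP [tA' /eqP <-]] //.
    - by rewrite (greedy_state_uniq gst tj tj').
    - by rewrite (greedy_state_mem gst tj) in tA'.
    - by rewrite (greedy_state_mem gst tj') in tA.
  have [tA|tA] := boolP (t \in A); last by exists (Some (f t)); rewrite x1S !inE tA eqxx orbT.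
  by have [j tj] := greedy_state_cover gst tA; exists (Some j); rewrite x1S inE tj.
move=> j; rewrite x1S => /set0Pn [t /setUP [tj|]].
  by rewrite (greedy_state_winner gst) ?subsetUl //; apply/set0Pn; exists t.
by rewrite inE => /andP [/fA gj0 /eqP fj]; rewrite -fj -(greedy_state_winner gst gj0) subsetUl.
Qed.

Lemma phase1_keep_alloc A (g : {ffun 'I_n -> {set 'I_m}}) (x1 : alloc n m) :
  greedy_state (A, g) -> x1 None = ~: A -> (forall j, x1 (Some j) = g j) ->
  is_alloc x1 /\ demand_met x1.
Proof.
move=> gst x1N x1S; split; last first.
  by move=> j; rewrite x1S => gj0; rewrite (greedy_state_winner gst gj0).
apply: is_allocP => [t [j|] [j'|]|t]; rewrite ?x1N ?x1S ?inE //.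
- by move=> tj tj'; rewrite (greedy_state_uniq gst tj tj').
- by move=> /(greedy_state_mem gst) ->.
- by move=> tA /(greedy_state_mem gst); rewrite (negbTE tA).
have [tA|tA] := boolP (t \in A); last by exists None; rewrite x1N inE.
by have [j tj] := greedy_state_cover gst tA; exists (Some j); rewrite x1S.
Qed.

Lemma phase1_alloc (x1 : alloc n m) : phase1 S v x1 -> exists2 s, dec_order v (Qset R S) s &
  [/\ is_alloc x1, demand_met x1 & forall j, (greedy S s).2 j \subset x1 (Some j)].
Proof.
case=> s [s_dec run1]; exists s => //; move: run1 (greedy_state_greedy s).
case: (greedy S s) => A g /=; case: ifP => [_ [f [fA [x1N x1S]]]|_ [x1N x1S]] gst.
  by have [? ?] := phase1_fill_alloc gst fA x1N x1S; split=> // j; rewrite x1S subsetUl.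
by have [? ?] := phase1_keep_alloc gst x1N x1S; split=> // j; rewrite x1S.
Qed.

Lemma phase1_spec (x1 : alloc n m) : phase1 S v x1 -> exists W : {set 'I_n},
  [/\ is_alloc x1, demand_met x1, W \subset Qset R S,
      {in W, forall j, S j \subset x1 (Some j)} &
      blocked_by W].
Proof.
case/phase1_alloc => s [s_perm s_sorted] [xa xd gx1].
have s_dec : pairwise (fun a b => v b <= v a) s.
  by rewrite -sorted_pairwise // => b a c vab vbc; apply: le_trans vbc vab.
have memQ j : (j \in s) = (j \in Qset R S) by rewrite (perm_mem s_perm) mem_enum.
case E : (greedy S s) (greedy_state_greedy s) gx1 => [A g] gst gx1.
exists [set j | g j != set0]; split=> //.
- by apply/subsetP => j; rewrite inE => gj0; rewrite -memQ; apply: greedy_winner_mem; rewrite E.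
- by move=> j; rewrite inE => gj0; rewrite -(greedy_state_winner gst gj0).
- move=> i; rewrite -memQ => /(greedy_blocked s_dec) [j []]; rewrite E => gj vij SjSi.
  by exists j; rewrite ?inE.
Qed.

Lemma sm_val_ge0 i T : 0 <= sm_val S v i T.
Proof. by rewrite /sm_val; case: ifP => // _; apply: ltW. Qed.

Lemma SW_ge0 (x : alloc n m) : 0 <= SW S v x.
Proof. by apply: sumr_ge0 => i _; apply: sm_val_ge0. Qed.

Lemma SM_run_covered (x : alloc n m) : SM_run S v x ->
  [/\ is_alloc x, demand_met x & forall i, v i <= meet_value x (S i)].
Proof.
case=> x1 [/phase1_spec [W [x1a x1d _ Wx1 blocked]] [s [[s_perm _] ->]]].
have [xa xd mono cov] := foldl_phase2_step s x1a x1d.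
split=> // i; have [iQ|iQ] := boolP (i \in Qset R S); last first.
  by apply: cov; rewrite (perm_mem s_perm) mem_enum inE.
have [j jW [vij /set0Pn [t /setIP [tSj tSi]]]] := blocked i iQ.
apply: le_trans vij (le_trans _ (mono _)); apply: (meet_value_ge (k := Some j)).
by apply/set0Pn; exists t; rewrite inE tSi (subsetP (Wx1 j jW)).
Qed.

Lemma SM_run_winners (x : alloc n m) : SM_run S v x -> exists W : {set 'I_n},
  [/\ W \subset Qset R S, \sum_(j in W) v j <= SW S v x &
      blocked_by W].
Proof.
case=> x1 [/phase1_spec [W [x1a x1d WQ Wx1 blocked]] [s [_ ->]]].
have [_ xd mono _] := foldl_phase2_step s x1a x1d.
exists W; split=> //; rewrite (SW_meet_value xd); apply: le_trans (mono _).
rewrite -SW_meet_value // /SW [X in _ <= X](bigID [in W]) /= -[X in X <= _]addr0.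
rewrite lerD ?sumr_ge0 // => [|i _]; last exact: sm_val_ge0.
by apply: ler_sum => j jW; rewrite /sm_val Wx1.
Qed.

Lemma SW_satisfied (y : alloc n m) :
  SW S v y = \sum_(i in [set i | S i \subset y (Some i)]) v i.
Proof. by rewrite /SW [RHS]big_mkcond; apply: eq_bigr => i _; rewrite inE. Qed.

Lemma satisfied_demands_disjoint (y : alloc n m) : is_alloc y ->
  disjoint_demands [set i | S i \subset y (Some i)].
Proof.
move=> ya i j; rewrite !inE => Siy Sjy ij; rewrite -setI_eq0.
apply/set0Pn => -[t /setIP [tSi tSj]].
have [eij] : Some i = Some j := alloc_uniq ya (subsetP Siy _ tSi) (subsetP Sjy _ tSj).
by rewrite eij eqxx in ij.
Qed.

(* Charging argument: a small agent [i] is charged to its blocker [j], at most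
   [#|S i :&: S j|] times [v j]; disjointness bounds the charge on [j] by [#|S j| v j]. *)
Lemma small_agents_bound (O W : {set 'I_n}) :
  disjoint_demands O -> W \subset Qset R S -> blocked_by W ->
  \sum_(i in O :&: Qset R S) v i <= Num.sqrt (m%:R : R) * \sum_(j in W) v j.
Proof.
move=> disjO WQ blocked; set Q := Qset R S.
have charge i : i \in O :&: Q -> v i <= \sum_(j in W) #|S i :&: S j|%:R * v j.
  case/setIP=> _ /blocked [j jW [vij SjSi]]; rewrite (bigD1 j) //=.
  apply: le_trans vij _; rewrite -[X in X <= _]addr0; apply: lerD.
    by apply: ler_peMl; [apply: ltW | rewrite ler1n card_gt0 setIC].
  by apply: sumr_ge0 => k _; rewrite mulr_ge0 ?ler0n ?ltW.
apply: le_trans (ler_sum _ charge) _; rewrite exchange_big mulr_sumr /=.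
apply: ler_sum => j jW; rewrite -mulr_suml -natr_sum; apply: ler_wpM2r; first exact: ltW.
apply: le_trans (_ : (#|S j|%:R : R) <= _); last by have := subsetP WQ j jW; rewrite inE.
rewrite ler_nat; apply: sum_card_setI_le; apply: sub_in2 disjO.
by move=> i /setIP [].
Qed.

Lemma large_agents_card (O : {set 'I_n}) :
  disjoint_demands O -> #|O :\: Qset R S|%:R <= Num.sqrt (m%:R : R).
Proof.
move=> disjO; set Q := Qset R S; set sq := Num.sqrt (m%:R : R).
have [m0|m_gt0] := posnP m.
  suff -> : O :\: Q = set0 by rewrite cards0 sqrtr_ge0.
  apply/setP => i; rewrite !inE; apply/negbTE; rewrite negb_and negbK.
  suff -> : #|S i| = 0%N by rewrite sqrtr_ge0.
  by apply/eqP; rewrite -leqn0; apply: leq_trans (max_card _) _; rewrite card_ord m0.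
have sq_gt0 : 0 < sq by rewrite sqrtr_gt0 ltr0n.
rewrite -(ler_pM2r sq_gt0) -expr2 sqr_sqrtr ?ler0n // mulr_natl -sumr_const.
apply: le_trans (_ : \sum_(i in O :\: Q) (#|S i|%:R : R) <= _).
  by apply: ler_sum => i /setDP [_]; rewrite inE -ltNge => /ltW.
rewrite -natr_sum ler_nat -[X in (_ <= X)%N](card_ord m) -cardsT.
under eq_bigr => i _ do rewrite -(setIT (S i)).
by apply: sum_card_setI_le; apply: sub_in2 disjO => i /setDP [].
Qed.

Lemma SM_run_approx (x y : alloc n m) : SM_run S v x -> is_alloc y ->
  SW S v y <= 2 * Num.sqrt (m%:R : R) * SW S v x.
Proof.
move=> run ya; have [xa xd cov] := SM_run_covered run.
have [W [WQ WSW blocked]] := SM_run_winners run.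
have disjO := satisfied_demands_disjoint ya.
have v_le_SW i : v i <= SW S v x.
  by rewrite SW_meet_value //; apply: le_trans (cov i) (meet_value_le_setT _ _).
rewrite SW_satisfied (big_setID (Qset R S)) /= -mulrA mulr_natl mulr2n.
apply: lerD.
  exact: le_trans (small_agents_bound disjO WQ blocked) (ler_wpM2l (sqrtr_ge0 _) WSW).
apply: le_trans (ler_sum _ (fun i _ => v_le_SW i)) _.
rewrite sumr_const -[SW S v x *+ _]mulr_natl.
by apply: ler_wpM2r; [apply: SW_ge0 | apply: large_agents_card].
Qed.

End SingleMindedRun.

Section ValueQueries.
Variables (R : realType) (n m : nat).

(* [v i = v_i(M)], and [t \in S_i] iff [v_i(M \ {t}) = 0]. *)
Definition query_list : seq ('I_n * {set 'I_m}) :=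
  [seq (i, T) | i <- enum 'I_n, T <- [set: 'I_m] :: [seq [set~ t] | t <- enum 'I_m]].

Fixpoint ask_all A (qs : seq ('I_n * {set 'I_m})) (k : seq R -> qprog n m R A) :
    qprog n m R A :=
  if qs is q :: qs' then QAsk q.1 q.2 (fun r => ask_all qs' (fun rs => k (r :: rs)))
  else k [::].

Lemma qrun_ask_all A (o : 'I_n -> {set 'I_m} -> R) qs (k : seq R -> qprog n m R A) :
  let rs := [seq o q.1 q.2 | q <- qs] in
  qrun o (ask_all qs k) = ((qrun o (k rs)).1, (size qs + (qrun o (k rs)).2)%N).
Proof. by elim: qs k => [|q qs IH] k /=; [case: (qrun o (k [::])) | rewrite IH]. Qed.

Lemma size_query_list : size query_list = (n * m.+1)%N.
Proof. by rewrite size_allpairs size_enum_ord /= size_map size_enum_ord. Qed.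

Definition answer (rs : seq R) q := nth 0 rs (index q query_list).
Definition decoded_value rs (i : 'I_n) := answer rs (i, [set: 'I_m]).
Definition decoded_demand rs (i : 'I_n) := [set t | answer rs (i, [set~ t]) == 0].

Lemma answer_query_list (o : 'I_n -> {set 'I_m} -> R) i T :
  (T = [set: 'I_m] \/ exists t, T = [set~ t]) ->
  answer [seq o q.1 q.2 | q <- query_list] (i, T) = o i T.
Proof.
move=> qT; have iTq : (i, T) \in query_list.
  apply: (allpairs_f (fun i T => (i, T))); first by rewrite mem_enum.
  case: qT => [->|[t ->]]; rewrite inE ?eqxx //.
  by apply/orP; right; apply: map_f; rewrite mem_enum.
by rewrite /answer (nth_map (i, T)) ?index_mem // nth_index.
Qed.

Lemma decode_queries (S : 'I_n -> {set 'I_m}) (v : 'I_n -> R) : (forall i, 0 < v i) ->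
  let rs := [seq sm_val S v q.1 q.2 | q <- query_list] in
  decoded_demand rs = S /\ decoded_value rs = v.
Proof.
move=> v_gt0 /=; split; apply: funext => i.
  apply/setP => t; rewrite inE /decoded_demand answer_query_list; last by right; exists t.
  rewrite /sm_val subsetC sub1set inE.
  by case: (t \in S i); rewrite /= ?eqxx ?gt_eqF.
by rewrite /decoded_value answer_query_list /sm_val ?subsetT //; left.
Qed.

Definition value_order (v : 'I_n -> R) (A : {set 'I_n}) :=
  sort (fun a b => v b <= v a) (enum A).

Lemma value_order_dec (v : 'I_n -> R) A : dec_order v A (value_order v A).
Proof. by split; [rewrite perm_sort | apply: sort_sorted => a b; apply: le_total]. Qed.

Definition sm_alloc (S : 'I_n -> {set 'I_m}) (v : 'I_n -> R) : alloc n m :=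
  let A := (greedy S (value_order v (Qset R S))).1 in
  let g := (greedy S (value_order v (Qset R S))).2 in
  let x1 : alloc n m :=
    if [pick j | g j != set0] is Some j0 then
      [ffun k => if k is Some j then g j :|: (if j0 == j then ~: A else set0) else set0]
    else [ffun k => if k is Some j then g j else ~: A] in
  foldl (phase2_step S v) x1 (value_order v (~: Qset R S)).

Lemma sm_alloc_run S v : SM_run S v (sm_alloc S v).
Proof.
rewrite /sm_alloc; set A := (greedy _ _).1; set g := (greedy _ _).2.
eexists; split; last by exists (value_order v (~: Qset R S)); split=> //; apply: value_order_dec.
exists (value_order v (Qset R S)); split; first exact: value_order_dec.
rewrite /= -/A -/g; case: pickP => [j0 gj0|g0]; last first.
  rewrite ifF; last by apply/negbTE/existsPn => j; rewrite g0.
  by split=> [|j]; rewrite ffunE.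
rewrite ifT; last by apply/existsP; exists j0.
exists (fun _ => j0); split=> //; split=> [|j]; rewrite ffunE //.
by congr (_ :|: _); apply/setP => t; case: (j0 == j); rewrite !inE ?andbT ?andbF.
Qed.

End ValueQueries.

Lemma query_count_bound (n m : nat) : (n * m.+1 <= 2 * (n + m) ^ 2)%N.
Proof. nia. Qed.

Theorem theorem4 (R : realType) :
  (exists C : R, 0 < C /\
    forall (n m : nat) (S : 'I_n -> {set 'I_m}) (v : 'I_n -> R),
      (forall i, 0 < v i) -> (forall i, S i != set0) ->
      forall x : alloc n m, SM_run S v x ->
        is_MC_CWE S v x /\
        (forall y : alloc n m, is_alloc y ->
           SW S v y <= C * Num.sqrt (m%:R : R) * SW S v x))
  /\
  (exists c k : nat, forall n m : nat,
    exists P : qprog n m R (alloc n m),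
      forall (S : 'I_n -> {set 'I_m}) (v : 'I_n -> R),
        (forall i, 0 < v i) -> (forall i, S i != set0) ->
        SM_run S v (qrun (sm_val S v) P).1 /\
        ((qrun (sm_val S v) P).2 <= c * (n + m) ^ k)%N).
Proof.
split.
  exists 2; split=> // n m S v v_gt0 S_neq0 x run.
  split; last by move=> y; apply: SM_run_approx.
  by have [xa xd cov] := SM_run_covered v_gt0 S_neq0 run; apply: MC_CWE_of_covered.
exists 2%N, 2%N => n m.
exists (ask_all (query_list n m)
          (fun rs => QRet (sm_alloc (decoded_demand m rs) (decoded_value m rs)))).
move=> S v v_gt0 S_neq0; rewrite qrun_ask_all /=; have [-> ->] := decode_queries S v_gt0.
by rewrite addn0 size_query_list; split; [apply: sm_alloc_run | apply: query_count_bound].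
Qed.
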